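(* Let $\mathbb{A}$ be a 2-category and $p:e\to b$ a 1-cell such that $\mathbb{A}$ has the two-dimensional cokernel diagram of $p$, a right Kan extension $(t,\gamma)$ of $p$ along $p$ exists, and it is preserved by $\delta^0:b\to b\uparrow_pb$. Let $(b,t,m,\eta)$ be the codensity monad of $p$, let $\ell:b\uparrow_pb\to b$ be the unique 1-cell with $\ell\delta^0=\mathrm{id}_b$, $\ell\delta^1=t$, $\mathrm{id}_\ell\ast\alpha=\gamma$, and let $\bar\ell:b\uparrow_pb\uparrow_pb\to b$ be the unique 1-cell with $\bar\ell D^0=\ell$ and $\bar\ell D^2=t\ell$. Then there are 2-cells $\theta:s^0\Rightarrow\ell$ and $\lambda:\bar\ell D^1\Rightarrow\ell$ (between 1-cells $b\uparrow_pb\to b$) such that $$\theta\ast\mathrm{id}_{\delta^1}=\eta,\quad \theta\ast\mathrm{id}_{\delta^0}=\mathrm{id}_{\mathrm{id}_b},\quad \lambda\ast\mathrm{id}_{\delta^1}=m,\quad \lambda\ast\mathrm{id}_{\delta^0}=\mathrm{id}_{\mathrm{id}_b}.$$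
   Context: A 2-category is a $\mathbf{Cat}$-enriched category; composition of 1-cells is juxtaposition, vertical composition of 2-cells is $\cdot$, horizontal composition is $\ast$, $\mathrm{id}_f$ is the identity 2-cell on $f$. Opcomma object of $p$ along itself: an object $b\uparrow_p b$ with 1-cells $\delta^0,\delta^1:b\to b\uparrow_p b$ and a 2-cell $\alpha:\delta^1p\Rightarrow\delta^0p$ such that for every object $y$ the functor $h\mapsto(h\delta^0,h\delta^1,\mathrm{id}_h\ast\alpha)$, $\xi\mapsto(\xi\ast\mathrm{id}_{\delta^0},\xi\ast\mathrm{id}_{\delta^1})$ is an isomorphism from $\mathbb{A}(b\uparrow_p b,y)$ onto the category of triples $(h_0,h_1:b\to y,\ \beta:h_1p\Rightarrow h_0p)$ with morphisms pairs of 2-cells $(\xi_0:h_0\Rightarrow h_0',\xi_1:h_1\Rightarrow h_1')$ satisfying $(\xi_0\ast\mathrm{id}_p)\cdot\beta=\beta'\cdot(\xi_1\ast\mathrm{id}_p)$. Two-dimensional pushout of a span $f_0:c\to c_0$, $f_1:c\to c_1$: an object $P$ with $q_0:c_0\to P$, $q_1:c_1\to P$, $q_0f_0=q_1f_1$, such that for every $y$, $k\mapsto(kq_0,kq_1)$ is an isomorphism from $\mathbb{A}(P,y)$ onto the category of pairs $(k_0,k_1)$ with $k_0f_0=k_1f_1$, whose morphisms are pairs of 2-cells $(\xi_0,\xi_1)$ with $\xi_0\ast\mathrm{id}_{f_0}=\xi_1\ast\mathrm{id}_{f_1}$. $\mathbb{A}$ has the two-dimensional cokernel diagram of $p$ if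 it has an opcomma object $b\uparrow_p b$ of $p$ along itself and a two-dimensional pushout $b\uparrow_pb\uparrow_pb$ of the span $(\delta^0,\delta^1)$, with 1-cells $D^0,D^2:b\uparrow_pb\to b\uparrow_pb\uparrow_pb$ satisfying $D^2\delta^0=D^0\delta^1$. Then $D^1$ is the unique 1-cell with $D^1\delta^1=D^2\delta^1$, $D^1\delta^0=D^0\delta^0$, $\mathrm{id}_{D^1}\ast\alpha=(\mathrm{id}_{D^0}\ast\alpha)\cdot(\mathrm{id}_{D^2}\ast\alpha)$, and $s^0:b\uparrow_pb\to b$ is the unique 1-cell with $s^0\delta^0=s^0\delta^1=\mathrm{id}_b$ and $\mathrm{id}_{s^0}\ast\alpha=\mathrm{id}_p$. Right Kan extension of $f:z\to y$ along $g:z\to x$: a pair $(r:x\to y,\gamma:rg\Rightarrow f)$ such that for each $k:x\to y$, $\beta\mapsto\gamma\cdot(\beta\ast\mathrm{id}_g)$ is a bijection from 2-cells $k\Rightarrow r$ to 2-cells $kg\Rightarrow f$; a 1-cell $d$ preserves it if $(dr,\mathrm{id}_d\ast\gamma)$ is a right Kan extension of $df$ along $g$. Codensity monad: if $(t,\gamma)$ is a right Kan extension of $p$ along $p$, then $m:tt\Rightarrow t$ is the unique 2-cell with $\gamma\cdot(m\ast\mathrm{id}_p)=\gamma\cdot(\mathrm{id}_t\ast\gamma)$ and $\eta:\mathrm{id}_b\Rightarrow t$ the unique 2-cell with $\gamma\cdot(\eta\ast\mathrm{id}_p)=\mathrm{id}_p$; $(b,t,m,\eta)$ is a monad, the codensity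 monad of $p$. *)

(* Heterogeneous equality of 2-cells: x : C f g and y : C f' g' are equal
   when (f, g) = (f', g') and x equals y along that identification. *)
Definition hcell_eq {H : Type} (C : H -> H -> Type) {f g f' g' : H}
  (x : C f g) (y : C f' g') : Prop :=
  existT (fun fg : H * H => C (fst fg) (snd fg)) (f, g) x =
  existT (fun fg : H * H => C (fst fg) (snd fg)) (f', g') y.

(* A (strict) 2-category = Cat-enriched category.
   comp1 g f = g f (first f, then g);  vcomp y x = y . x (first x, then y);
   hcomp y x = y * x. *)
Record TwoCat := {
  Obj : Type;
  Hom : Obj -> Obj -> Type;
  Cell : forall a b : Obj, Hom a b -> Hom a b -> Type;
  id1 : forall a : Obj, Hom a a;
  comp1 : forall a b c : Obj, Hom b c -> Hom a b -> Hom a c;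
  id2 : forall (a b : Obj) (f : Hom a b), Cell a b f f;
  vcomp : forall (a b : Obj) (f g h : Hom a b), Cell a b g h -> Cell a b f g -> Cell a b f h;
  hcomp : forall (a b c : Obj) (g g' : Hom b c) (f f' : Hom a b),
      Cell b c g g' -> Cell a b f f' -> Cell a c (comp1 a b c g f) (comp1 a b c g' f');
  vcomp_assoc : forall a b (f g h k : Hom a b) (z : Cell a b h k) (y : Cell a b g h) (x : Cell a b f g),
      vcomp a b f h k z (vcomp a b f g h y x) = vcomp a b f g k (vcomp a b g h k z y) x;
  vcomp_id_l : forall a b (f g : Hom a b) (x : Cell a b f g), vcomp a b f g g (id2 a b g) x = x;
  vcomp_id_r : forall a b (f g : Hom a b) (x : Cell a b f g), vcomp a b f f g x (id2 a b f) = x;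
  hcomp_id2 : forall a b c (g : Hom b c) (f : Hom a b),
      hcomp a b c g g f f (id2 b c g) (id2 a b f) = id2 a c (comp1 a b c g f);
  interchange : forall a b c (g g' g'' : Hom b c) (f f' f'' : Hom a b)
      (y' : Cell b c g' g'') (y : Cell b c g g') (x' : Cell a b f' f'') (x : Cell a b f f'),
      hcomp a b c g g'' f f'' (vcomp b c g g' g'' y' y) (vcomp a b f f' f'' x' x)
      = vcomp a c _ _ _ (hcomp a b c g' g'' f' f'' y' x') (hcomp a b c g g' f f' y x);
  comp1_assoc : forall a b c d (h : Hom c d) (g : Hom b c) (f : Hom a b),
      comp1 a c d h (comp1 a b c g f) = comp1 a b d (comp1 b c d h g) f;
  comp1_id_l : forall a b (f : Hom a b), comp1 a b b (id1 b) f = f;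
  comp1_id_r : forall a b (f : Hom a b), comp1 a a b f (id1 a) = f;
  hcomp_assoc : forall a b c d (h h' : Hom c d) (g g' : Hom b c) (f f' : Hom a b)
      (z : Cell c d h h') (y : Cell b c g g') (x : Cell a b f f'),
      hcell_eq (Cell a d) (hcomp a c d h h' _ _ z (hcomp a b c g g' f f' y x))
                          (hcomp a b d _ _ f f' (hcomp b c d h h' g g' z y) x);
  hcomp_id_l : forall a b (f f' : Hom a b) (x : Cell a b f f'),
      hcell_eq (Cell a b) (hcomp a b b (id1 b) (id1 b) f f' (id2 b b (id1 b)) x) x;
  hcomp_id_r : forall a b (f f' : Hom a b) (x : Cell a b f f'),
      hcell_eq (Cell a b) (hcomp a a b f f' (id1 a) (id1 a) x (id2 a a (id1 a))) x
}.


Arguments Hom {t} a b.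
Arguments Cell {t a b} f g.
Arguments id1 {t} a.
Arguments comp1 {t a b c} g f.
Arguments id2 {t a b} f.
Arguments vcomp {t a b f g h} y x.
Arguments hcomp {t a b c g g' f f'} y x.
Arguments comp1_assoc {t a b c d} h g f.

Section TwoCatDefs.
Variable A : TwoCat.

Definition cell_eq {a b : Obj A} {f g f' g' : Hom a b} (x : Cell f g) (y : Cell f' g') : Prop :=
  hcell_eq (@Cell A a b) x y.

Definition tr {a b : Obj A} {f g f' g' : Hom a b} (e1 : f = f') (e2 : g = g')
  (x : Cell f g) : Cell f' g' :=
  match e1 in _ = f1 return Cell f1 g' with
  | eq_refl => match e2 in _ = g1 return Cell f g1 with eq_refl => x end
  end.

(* z = y . x, up to the canonical identifications of 1-cells *)
Definition is_vcomp {a b : Obj A} {f1 g1 f2 g2 f3 g3 : Hom a b}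
  (z : Cell f3 g3) (y : Cell f2 g2) (x : Cell f1 g1) : Prop :=
  exists (f g h : Hom a b) (y' : Cell g h) (x' : Cell f g),
    cell_eq y' y /\ cell_eq x' x /\ cell_eq (vcomp y' x') z.

Definition opc_triple_cell {e b bb y : Obj A} (p : Hom e b) (d0 d1 : Hom b bb)
  (al : Cell (comp1 d1 p) (comp1 d0 p)) (h : Hom bb y)
  : Cell (comp1 (comp1 h d1) p) (comp1 (comp1 h d0) p) :=
  tr (comp1_assoc h d1 p) (comp1_assoc h d0 p) (hcomp (id2 h) al).

(* Opcomma object of p along itself: for every y, the comparison functor is an
   isomorphism of categories (bijective on objects and on each hom-set). *)
Definition IsOpcomma {e b bb : Obj A} (p : Hom e b) (d0 d1 : Hom b bb)
  (al : Cell (comp1 d1 p) (comp1 d0 p)) : Prop :=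
  forall y : Obj A,
    (forall (h0 h1 : Hom b y) (be : Cell (comp1 h1 p) (comp1 h0 p)),
        exists! h : Hom bb y,
          comp1 h d0 = h0 /\ comp1 h d1 = h1 /\ cell_eq (hcomp (id2 h) al) be)
    /\
    (forall (h h' : Hom bb y) (x0 : Cell (comp1 h d0) (comp1 h' d0))
            (x1 : Cell (comp1 h d1) (comp1 h' d1)),
        vcomp (hcomp x0 (id2 p)) (opc_triple_cell p d0 d1 al h)
        = vcomp (opc_triple_cell p d0 d1 al h') (hcomp x1 (id2 p)) ->
        exists! xi : Cell h h', hcomp xi (id2 d0) = x0 /\ hcomp xi (id2 d1) = x1).

Definition IsPushout2 {c c0 c1 P : Obj A} (f0 : Hom c c0) (f1 : Hom c c1)
  (q0 : Hom c0 P) (q1 : Hom c1 P) : Prop :=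
  comp1 q0 f0 = comp1 q1 f1 /\
  forall y : Obj A,
    (forall (k0 : Hom c0 y) (k1 : Hom c1 y), comp1 k0 f0 = comp1 k1 f1 ->
        exists! k : Hom P y, comp1 k q0 = k0 /\ comp1 k q1 = k1)
    /\
    (forall (k k' : Hom P y) (x0 : Cell (comp1 k q0) (comp1 k' q0))
            (x1 : Cell (comp1 k q1) (comp1 k' q1)),
        cell_eq (hcomp x0 (id2 f0)) (hcomp x1 (id2 f1)) ->
        exists! xi : Cell k k', hcomp xi (id2 q0) = x0 /\ hcomp xi (id2 q1) = x1).

Definition IsRan {z x y : Obj A} (g : Hom z x) (f : Hom z y) (r : Hom x y)
  (gam : Cell (comp1 r g) f) : Prop :=
  forall (k : Hom x y) (de : Cell (comp1 k g) f),
    exists! be : Cell k r, vcomp gam (hcomp be (id2 g)) = de.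

Definition PreservesRan {z x y y' : Obj A} (g : Hom z x) (f : Hom z y) (r : Hom x y)
  (gam : Cell (comp1 r g) f) (d : Hom y y') : Prop :=
  IsRan g (comp1 d f) (comp1 d r)
    (tr (comp1_assoc d r g) eq_refl (hcomp (id2 d) gam)).

End TwoCatDefs.

Arguments cell_eq {A a b f g f' g'} x y.
Arguments is_vcomp {A a b f1 g1 f2 g2 f3 g3} z y x.

(* Both 2-cells are induced by the two-dimensional universal property of the
   opcomma object: a 2-cell between 1-cells out of b↑_p b is the same as a pair
   of 2-cells on their δ^0- and δ^1-components that is compatible with α.
   For θ the pair (id, η) is compatible because γ·(ηp) = id_p.  For λ the pair
   (id, m) is compatible because ℓ̄D^1α = γ·(tγ), by the defining property of D^1,
   while γ·(mp) = γ·(tγ) is the definition of m. *)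

From Stdlib Require Import Eqdep.

Section CellEq.
Context {A : TwoCat}.

Lemma cell_eq_indices {a b : Obj A} {f g f' g' : Hom a b} (x : Cell f g) (y : Cell f' g') :
  cell_eq x y -> f = f' /\ g = g'.
Proof.
  intros H. apply (f_equal (@projT1 _ _)) in H. simpl in H. injection H. auto.
Qed.

Lemma cell_eq_eq {a b : Obj A} {f g : Hom a b} (x y : Cell f g) : cell_eq x y -> x = y.
Proof. apply inj_pair2. Qed.

Lemma cell_eq_sym {a b : Obj A} {f g f' g' : Hom a b} (x : Cell f g) (y : Cell f' g') :
  cell_eq x y -> cell_eq y x.
Proof. apply eq_sym. Qed.

Lemma cell_eq_trans {a b : Obj A} {f g f' g' f'' g'' : Hom a b}
  (x : Cell f g) (y : Cell f' g') (z : Cell f'' g'') :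
  cell_eq x y -> cell_eq y z -> cell_eq x z.
Proof. apply eq_trans. Qed.

Lemma cell_eq_tr {a b : Obj A} {f g f' g' : Hom a b} (e1 : f = f') (e2 : g = g')
  (x : Cell f g) : cell_eq (tr A e1 e2 x) x.
Proof. destruct e1, e2. reflexivity. Qed.

Lemma cell_eq_id2 {a b : Obj A} {f g : Hom a b} : f = g -> cell_eq (id2 f) (id2 g).
Proof. intros ->. reflexivity. Qed.

Lemma cell_eq_vcomp {a b : Obj A} {f g h f' g' h' : Hom a b}
  (y : Cell g h) (x : Cell f g) (y' : Cell g' h') (x' : Cell f' g') :
  cell_eq y y' -> cell_eq x x' -> cell_eq (vcomp y x) (vcomp y' x').
Proof.
  intros Hy Hx.
  destruct (cell_eq_indices _ _ Hy) as [-> ->], (cell_eq_indices _ _ Hx) as [-> _].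
  apply cell_eq_eq in Hy, Hx. subst. reflexivity.
Qed.

Lemma cell_eq_hcomp {a b c : Obj A} {g1 g2 g1' g2' : Hom b c} {f1 f2 f1' f2' : Hom a b}
  (y : Cell g1 g2) (x : Cell f1 f2) (y' : Cell g1' g2') (x' : Cell f1' f2') :
  cell_eq y y' -> cell_eq x x' -> cell_eq (hcomp y x) (hcomp y' x').
Proof.
  intros Hy Hx.
  destruct (cell_eq_indices _ _ Hy) as [-> ->], (cell_eq_indices _ _ Hx) as [-> ->].
  apply cell_eq_eq in Hy, Hx. subst. reflexivity.
Qed.

Lemma vcomp_hcomp_id2_l {a b c : Obj A} (g : Hom b c) (f : Hom a b)
  {k : Hom a c} (x : Cell k (comp1 g f)) :
  vcomp (hcomp (id2 g) (id2 f)) x = x.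
Proof. rewrite hcomp_id2. apply vcomp_id_l. Qed.

Lemma whisker_l_eq {a b c : Obj A} {g g' : Hom b c} {f f' : Hom a b} (x : Cell f f') :
  g = g' -> cell_eq (hcomp (id2 g) x) (hcomp (id2 g') x).
Proof. intros ->. reflexivity. Qed.

Lemma whisker_l_comp {a b c d : Obj A} (h : Hom c d) (g : Hom b c) {f f' : Hom a b}
  (x : Cell f f') :
  cell_eq (hcomp (id2 h) (hcomp (id2 g) x)) (hcomp (id2 (comp1 h g)) x).
Proof. rewrite <- hcomp_id2. apply hcomp_assoc. Qed.

Lemma whisker_l_vcomp {a b c : Obj A} (g : Hom b c) {f f' f'' : Hom a b}
  (y : Cell f' f'') (x : Cell f f') :
  hcomp (id2 g) (vcomp y x) = vcomp (hcomp (id2 g) y) (hcomp (id2 g) x).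
Proof. rewrite <- interchange, vcomp_id_l. reflexivity. Qed.

Lemma is_vcomp_whisker_l {a b c : Obj A} (g : Hom b c) {f1 g1 f2 g2 f3 g3 : Hom a b}
  (z : Cell f3 g3) (y : Cell f2 g2) (x : Cell f1 g1) :
  is_vcomp z y x -> is_vcomp (hcomp (id2 g) z) (hcomp (id2 g) y) (hcomp (id2 g) x).
Proof.
  intros (f & k & h & y' & x' & Hy & Hx & Hz).
  exists (comp1 g f), (comp1 g k), (comp1 g h), (hcomp (id2 g) y'), (hcomp (id2 g) x').
  split; [|split]; try (apply cell_eq_hcomp; [reflexivity | assumption]).
  rewrite <- whisker_l_vcomp. apply cell_eq_hcomp; [reflexivity | exact Hz].
Qed.

Lemma is_vcomp_cell_eq {a b : Obj A} {f1 g1 f2 g2 f3 g3 f g h : Hom a b}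
  (z : Cell f3 g3) (y : Cell f2 g2) (x : Cell f1 g1) (y' : Cell g h) (x' : Cell f g) :
  is_vcomp z y x -> cell_eq y y' -> cell_eq x x' -> cell_eq z (vcomp y' x').
Proof.
  intros (k0 & k1 & k2 & y0 & x0 & Hy0 & Hx0 & Hz) Hy Hx.
  apply cell_eq_sym, (cell_eq_trans _ (vcomp y0 x0)), Hz.
  apply cell_eq_vcomp; apply cell_eq_sym; eapply cell_eq_trans; eassumption.
Qed.

End CellEq.

Section OpcommaCells.
Context {A : TwoCat} {e b bb : Obj A} {p : Hom e b} {d0 d1 : Hom b bb}
  {al : Cell (comp1 d1 p) (comp1 d0 p)}.
Hypothesis Hopc : IsOpcomma A p d0 d1 al.

Lemma opcomma_lift_cell {y : Obj A} (h h' : Hom bb y) {f0 f1 g0 g1 : Hom b y}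
  (x0 : Cell f0 g0) (x1 : Cell f1 g1)
  (c : Cell (comp1 f1 p) (comp1 f0 p)) (c' : Cell (comp1 g1 p) (comp1 g0 p)) :
  comp1 h d0 = f0 -> comp1 h d1 = f1 -> comp1 h' d0 = g0 -> comp1 h' d1 = g1 ->
  cell_eq (hcomp (id2 h) al) c -> cell_eq (hcomp (id2 h') al) c' ->
  vcomp (hcomp x0 (id2 p)) c = vcomp c' (hcomp x1 (id2 p)) ->
  exists xi : Cell h h', cell_eq (hcomp xi (id2 d0)) x0 /\ cell_eq (hcomp xi (id2 d1)) x1.
Proof.
  intros <- <- <- <- Hc Hc' Hcompat.
  assert (Eh : opc_triple_cell A p d0 d1 al h = c).
  { apply cell_eq_eq, (cell_eq_trans _ _ _ (cell_eq_tr _ _ _)), Hc. }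
  assert (Eh' : opc_triple_cell A p d0 d1 al h' = c').
  { apply cell_eq_eq, (cell_eq_trans _ _ _ (cell_eq_tr _ _ _)), Hc'. }
  rewrite <- Eh, <- Eh' in Hcompat.
  destruct (proj2 (Hopc y) h h' x0 x1 Hcompat) as [xi [[<- <-] _]].
  exists xi. split; reflexivity.
Qed.

End OpcommaCells.

Section CodensityCells.
Variables (A : TwoCat) (e b bb bbb : Obj A) (p : Hom e b).
Variables (d0 d1 : Hom b bb) (al : Cell (comp1 d1 p) (comp1 d0 p)).
Hypothesis Hopc : IsOpcomma A p d0 d1 al.
Variables (t : Hom b b) (gam : Cell (comp1 t p) p).
Variable l : Hom bb b.
Hypotheses (Hla : comp1 l d0 = id1 b) (Hlb : comp1 l d1 = t).
Hypothesis Hlc : cell_eq (hcomp (id2 l) al) gam.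

Let gam_id : Cell (comp1 t p) (comp1 (id1 b) p) :=
  tr A eq_refl (eq_sym (comp1_id_l _ _ _ p)) gam.

Lemma whisker_ell_alpha : cell_eq (hcomp (id2 l) al) gam_id.
Proof. exact (cell_eq_trans _ _ _ Hlc (cell_eq_sym _ _ (cell_eq_tr _ _ _))). Qed.

Section Unit.
Variables (s0 : Hom bb b) (eta : Cell (id1 b) t).
Hypotheses (Hs0a : comp1 s0 d0 = id1 b) (Hs0b : comp1 s0 d1 = id1 b).
Hypothesis Hs0c : cell_eq (hcomp (id2 s0) al) (id2 p).
Hypothesis Heta : cell_eq (vcomp gam (hcomp eta (id2 p))) (id2 p).

Lemma codensity_unit_lift : exists theta : Cell s0 l,
  cell_eq (hcomp theta (id2 d0)) (id2 (id1 b)) /\ cell_eq (hcomp theta (id2 d1)) eta.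
Proof.
  assert (Hid : cell_eq (id2 p) (id2 (comp1 (id1 b) p))).
  { apply cell_eq_id2. symmetry. apply comp1_id_l. }
  apply (opcomma_lift_cell Hopc s0 l (id2 (id1 b)) eta (id2 _) gam_id Hs0a Hs0b Hla Hlb).
  - exact (cell_eq_trans _ _ _ Hs0c Hid).
  - exact whisker_ell_alpha.
  - apply cell_eq_eq. rewrite vcomp_hcomp_id2_l.
    apply (cell_eq_trans _ _ _ (cell_eq_sym _ _ Hid)), cell_eq_sym.
    refine (cell_eq_trans _ _ _ _ Heta).
    apply cell_eq_vcomp; [apply cell_eq_tr | reflexivity].
Qed.

End Unit.

Section Multiplication.
Variables (D0 D1 D2 : Hom bb bbb) (lb : Hom bbb b) (m : Cell (comp1 t t) t).
Hypotheses (HD1a : comp1 D1 d1 = comp1 D2 d1) (HD1b : comp1 D1 d0 = comp1 D0 d0).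
Hypothesis HD1c : is_vcomp (hcomp (id2 D1) al) (hcomp (id2 D0) al) (hcomp (id2 D2) al).
Hypotheses (Hlba : comp1 lb D0 = l) (Hlbb : comp1 lb D2 = comp1 t l).
Hypothesis Hm : cell_eq (vcomp gam (hcomp m (id2 p))) (vcomp gam (hcomp (id2 t) gam)).

Lemma lbD1_d0 : comp1 (comp1 lb D1) d0 = id1 b.
Proof. rewrite <- comp1_assoc, HD1b, comp1_assoc, Hlba. exact Hla. Qed.

Lemma lbD1_d1 : comp1 (comp1 lb D1) d1 = comp1 t t.
Proof. rewrite <- comp1_assoc, HD1a, comp1_assoc, Hlbb, <- comp1_assoc, Hlb. reflexivity. Qed.

Lemma whisker_lbD1_alpha :
  cell_eq (hcomp (id2 (comp1 lb D1)) al) (vcomp gam (hcomp (id2 t) gam)).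
Proof.
  assert (HD0 : cell_eq (hcomp (id2 lb) (hcomp (id2 D0) al)) gam).
  { eapply cell_eq_trans; [apply whisker_l_comp|].
    exact (cell_eq_trans _ _ _ (whisker_l_eq al Hlba) Hlc). }
  assert (HD2 : cell_eq (hcomp (id2 lb) (hcomp (id2 D2) al)) (hcomp (id2 t) gam)).
  { eapply cell_eq_trans; [apply whisker_l_comp|].
    eapply cell_eq_trans; [exact (whisker_l_eq al Hlbb)|].
    eapply cell_eq_trans; [apply cell_eq_sym, whisker_l_comp|].
    apply cell_eq_hcomp; [reflexivity | exact Hlc]. }
  eapply cell_eq_trans; [apply cell_eq_sym, whisker_l_comp|].
  exact (is_vcomp_cell_eq _ _ _ _ _ (is_vcomp_whisker_l lb _ _ _ HD1c) HD0 HD2).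
Qed.

Lemma codensity_mult_lift : exists lam : Cell (comp1 lb D1) l,
  cell_eq (hcomp lam (id2 d0)) (id2 (id1 b)) /\ cell_eq (hcomp lam (id2 d1)) m.
Proof.
  set (c := tr A (comp1_assoc t t p) (eq_sym (comp1_id_l _ _ _ p))
              (vcomp gam (hcomp (id2 t) gam))).
  apply (opcomma_lift_cell Hopc _ l (id2 (id1 b)) m c gam_id lbD1_d0 lbD1_d1 Hla Hlb).
  - exact (cell_eq_trans _ _ _ whisker_lbD1_alpha (cell_eq_sym _ _ (cell_eq_tr _ _ _))).
  - exact whisker_ell_alpha.
  - apply cell_eq_eq. rewrite vcomp_hcomp_id2_l.
    apply (cell_eq_trans _ _ _ (cell_eq_tr _ _ _)), cell_eq_sym.
    refine (cell_eq_trans _ _ _ _ Hm).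
    apply cell_eq_vcomp; [apply cell_eq_tr | reflexivity].
Qed.

End Multiplication.

End CodensityCells.

Theorem lemma4p6 (A : TwoCat) (e b bb bbb : Obj A) (p : Hom e b)
  (* opcomma object b↑_p b *)
  (d0 d1 : Hom b bb) (al : Cell (comp1 d1 p) (comp1 d0 p))
  (Hopc : IsOpcomma A p d0 d1 al)
  (* two-dimensional pushout b↑_p b↑_p b of the span (δ^0, δ^1) *)
  (D0 D2 : Hom bb bbb) (Hpush : IsPushout2 A d0 d1 D2 D0)
  (* D^1 *)
  (D1 : Hom bb bbb)
  (HD1a : comp1 D1 d1 = comp1 D2 d1) (HD1b : comp1 D1 d0 = comp1 D0 d0)
  (HD1c : is_vcomp (hcomp (id2 D1) al) (hcomp (id2 D0) al) (hcomp (id2 D2) al))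
  (* s^0 *)
  (s0 : Hom bb b)
  (Hs0a : comp1 s0 d0 = id1 b) (Hs0b : comp1 s0 d1 = id1 b)
  (Hs0c : cell_eq (hcomp (id2 s0) al) (id2 p))
  (* right Kan extension (t, γ) of p along p, preserved by δ^0 *)
  (t : Hom b b) (gam : Cell (comp1 t p) p)
  (Hran : IsRan A p p t gam) (Hpres : PreservesRan A p p t gam d0)
  (* codensity monad (b, t, m, η) *)
  (m : Cell (comp1 t t) t) (eta : Cell (id1 b) t)
  (Hm : cell_eq (vcomp gam (hcomp m (id2 p))) (vcomp gam (hcomp (id2 t) gam)))
  (Heta : cell_eq (vcomp gam (hcomp eta (id2 p))) (id2 p))
  (* ℓ *)
  (l : Hom bb b)
  (Hla : comp1 l d0 = id1 b) (Hlb : comp1 l d1 = t)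
  (Hlc : cell_eq (hcomp (id2 l) al) gam)
  (* ℓ-bar *)
  (lb : Hom bbb b)
  (Hlba : comp1 lb D0 = l) (Hlbb : comp1 lb D2 = comp1 t l) :
  exists (theta : Cell s0 l) (lam : Cell (comp1 lb D1) l),
    cell_eq (hcomp theta (id2 d1)) eta /\
    cell_eq (hcomp theta (id2 d0)) (id2 (id1 b)) /\
    cell_eq (hcomp lam (id2 d1)) m /\
    cell_eq (hcomp lam (id2 d0)) (id2 (id1 b)).
Proof.
  destruct (codensity_unit_lift A e b bb p d0 d1 al Hopc t gam l Hla Hlb Hlc
              s0 eta Hs0a Hs0b Hs0c Heta) as [theta [Htheta0 Htheta1]].
  destruct (codensity_mult_lift A e b bb bbb p d0 d1 al Hopc t gam l Hla Hlb Hlc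
              D0 D1 D2 lb m HD1a HD1b HD1c Hlba Hlbb Hm) as [lam [Hlam0 Hlam1]].
  exists theta, lam. auto.
Qed.
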